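(* Let $n$ be an odd positive integer and let $\mathcal{B}$ be a balanced bipartite graph on $2n$ vertices with parts $V_1$ and $V_2$ such that $\delta(\mathcal{B})\geq\frac{n+1}{2}$. Suppose that each of $V_1$ and $V_2$ contains at most one vertex of degree exactly $\frac{n+1}{2}$, i.e. $\max\{|\{v\in V_1: d_{\mathcal{B}}(v)=\frac{n+1}{2}\}|,\ |\{u\in V_2: d_{\mathcal{B}}(u)=\frac{n+1}{2}\}|\}\leq 1$. Then $f(\mathcal{B})=n+1$.
   Context: All graphs are finite and simple. A balanced bipartite graph on $2n$ vertices is a bipartite graph with a given bipartition $(V_1,V_2)$ where $|V_1|=|V_2|=n$. $d_G(v)$ is the degree of $v$ and $\delta(G)$ the minimum degree of $G$. The forest number $f(G)$ is the maximum cardinality of a subset $S\subseteq V(G)$ such that the induced subgraph $G[S]$ is a forest. *)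

From mathcomp Require Import all_boot.
Set Implicit Arguments. Unset Strict Implicit. Unset Printing Implicit Defensive.

Definition simple_graph (T : finType) (e : rel T) : Prop :=
  symmetric e /\ irreflexive e.

Definition deg (T : finType) (e : rel T) (v : T) : nat := #|[set u | e v u]|.

Definition min_deg_ge (T : finType) (e : rel T) (k : nat) : Prop :=
  forall v, k <= deg e v.

Definition cycle_in (T : finType) (e : rel T) (S : {set T}) (c : seq T) : bool :=
  [&& 3 <= size c, uniq c, all (fun x => x \in S) c & cycle e c].

Definition induces_forest (T : finType) (e : rel T) (S : {set T}) : Prop :=
  forall c : seq T, ~~ cycle_in e S c.

(* f(G) = k : k is the maximum cardinality of a set inducing a forest. *)
Definition forest_number_is (T : finType) (e : rel T) (k : nat) : Prop :=
  (exists S : {set T}, induces_forest e S /\ #|S| = k) /\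
  (forall S : {set T}, induces_forest e S -> #|S| <= k).

Definition balanced_bipartite (T : finType) (e : rel T) (V1 V2 : {set T}) (n : nat) : Prop :=
  simple_graph e /\ V1 :&: V2 = set0 /\ V1 :|: V2 = [set: T] /\
  #|V1| = n /\ #|V2| = n /\
  (forall x y, e x y -> (x \in V1) = (y \in V2)).

(* A vertex v of V1 together with V2 induces a star plus isolated vertices, so
   f >= n + 1.  Conversely let S induce a forest with n + 2 = 2k + 3 vertices,
   a of them in V1 and b in V2; it has at most n + 1 edges.  A vertex of
   S :&: V1 has degree at least k + 2 (k + 1 for at most one vertex) and at
   most n - b of its neighbours lie outside S, so S has at least
   a (k + 2 - (n - b)) - 1 edges, and symmetrically at least
   b (k + 2 - (n - a)) - 1.  Since a + b = n + 2, one of the two bounds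
   exceeds n + 1. *)

From mathcomp Require Import all_boot zify.

Set Implicit Arguments.
Unset Strict Implicit.
Unset Printing Implicit Defensive.

Lemma induces_forestS (T : finType) (e : rel T) (S S' : {set T}) :
  S' \subset S -> induces_forest e S -> induces_forest e S'.
Proof.
move=> sub_S' forestS c; apply/negP => /and4P[size_c uniq_c all_c cycle_c].
have /negP := forestS c; apply; rewrite /cycle_in size_c uniq_c cycle_c andbT /=.
by apply/allP => x /(allP all_c); apply: (subsetP sub_S').
Qed.

Lemma sum_indicator_card (T : finType) (A : {set T}) (P : pred T) :
  \sum_(u in A) (P u : nat) = #|[set u in A | P u]|.
Proof.
rewrite -sum1_card big_mkcond [RHS]big_mkcond /=; apply: eq_bigr => u _.
by rewrite inE; case: (u \in A); case: (P u).
Qed.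

Section InducedDegree.
Variables (T : finType) (e : rel T).
Hypotheses (e_sym : symmetric e) (e_irr : irreflexive e).

Definition deg_in (S : {set T}) v := #|[set u in S | e v u]|.

Lemma deg_in_le (S : {set T}) v : v \in S -> deg_in S v <= #|S|.-1.
Proof.
move=> vS; rewrite (cardsD1 v S) vS add1n /=; apply: subset_leq_card.
apply/subsetP => u; rewrite !inE => /andP[uS evu]; rewrite uS andbT.
by apply: contraTneq evu => ->; rewrite e_irr.
Qed.

Lemma sum_deg_in_setD1 (S : {set T}) v : v \in S ->
  \sum_(u in S) deg_in S u = \sum_(u in S :\ v) deg_in (S :\ v) u + (deg_in S v).*2.
Proof.
move=> vS; rewrite (bigD1 v) //= -addnn.
have deg_inD1 u : u != v -> deg_in S u = deg_in (S :\ v) u + e v u.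
  move=> uv; rewrite /deg_in (cardsD1 v [set w in S | e u w]) addnC !inE vS e_sym.
  by congr (_ + _); congr #|pred_of_set _|; apply/setP => w; rewrite !inE andbA.
have -> : \sum_(u in S | u != v) deg_in S u
           = \sum_(u in S :\ v) (deg_in (S :\ v) u + e v u).
  rewrite [RHS](eq_bigl (fun u => (u \in S) && (u != v))) => [|u]; last first.
    by rewrite !inE andbC.
  by apply: eq_bigr => u /andP[_]; apply: deg_inD1.
rewrite big_split /= sum_indicator_card.
have -> : #|[set u in S :\ v | e v u]| = deg_in S v.
  congr #|pred_of_set _|; apply/setP => u; rewrite !inE.
  by case: eqVneq => [->|]; rewrite ?e_irr ?andbF.
lia.
Qed.

Lemma path_extend_or_cycle (S : {set T}) x p :
  2 <= deg_in S x -> uniq (x :: p) -> all (fun y => y \in S) (x :: p) ->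
  path e x p ->
  (exists c, cycle_in e S c) \/ (exists y, [/\ y \in S, y \notin x :: p & e y x]).
Proof.
move=> /card_gt1P[y1 [y2 [+ + y12]]] uniq_p all_p path_p.
rewrite !inE => /andP[y1S xy1] /andP[y2S xy2].
have [y1p|] := boolP (y1 \in x :: p); last by right; exists y1; rewrite e_sym.
have [y2p|] := boolP (y2 \in x :: p); last by right; exists y2; rewrite e_sym.
left.
(* a neighbour of x on the path other than its successor closes a cycle *)
have [y [yS xy yp y_next]] :
    exists y, [/\ y \in S, e x y, y \in x :: p & y != head x p].
  have [y1_next|] := eqVneq y1 (head x p); last by exists y1.
  by exists y2; split => //; rewrite -y1_next eq_sym.
have yx : y != x by apply: contraTneq xy => ->; rewrite e_irr.
have {}yp : y \in p by move: yp; rewrite inE (negbTE yx).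
move: uniq_p all_p path_p y_next; case/splitPr: yp => p1 p2 uniq_p all_p path_p y_next.
exists (x :: rcons p1 y).
have p_split : x :: p1 ++ y :: p2 = (x :: rcons p1 y) ++ p2 by rewrite -cat_rcons.
apply/and4P; split.
- case: p1 {p_split uniq_p all_p path_p} y_next => [|? ?] /=.
    by rewrite eqxx.
  by rewrite size_rcons.
- by move: uniq_p; rewrite p_split cat_uniq => /andP[].
- by move: all_p; rewrite p_split all_cat => /andP[].
- rewrite /= rcons_path last_rcons e_sym xy andbT.
  by move: path_p; rewrite -cat_rcons cat_path => /andP[].
Qed.

Lemma cycle_of_deg_in_ge2 (S : {set T}) :
  S != set0 -> {in S, forall v, 2 <= deg_in S v} -> exists c, cycle_in e S c.
Proof.
move=> /set0Pn[x xS] deg2.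
suff grow m y p : #|S| - size (y :: p) <= m -> uniq (y :: p) ->
    all (fun z => z \in S) (y :: p) -> path e y p -> exists c, cycle_in e S c.
  by apply: (grow #|S| x [::]); rewrite //= ?xS ?leq_subr.
elim: m y p => [|m IH] y p le_m uniq_p all_p path_p;
  have yS : y \in S by case/andP: all_p.
all: case: (path_extend_or_cycle (deg2 y yS) uniq_p all_p path_p) => //.
all: move=> -[z [zS z_new zy]].
- have uniq_zp : uniq (z :: y :: p) by rewrite cons_uniq z_new.
  have : size (z :: y :: p) <= #|S|.
    rewrite -(card_uniqP uniq_zp); apply/subset_leq_card/subsetP => w.
    by rewrite inE => /predU1P[->//|]; apply/allP.
  by move: le_m => /=; lia.
- apply: (IH z (y :: p)); rewrite /= ?z_new ?zS ?zy //.
  by move: le_m => /=; lia.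
Qed.

Lemma forest_has_leaf (S : {set T}) :
  induces_forest e S -> S != set0 -> exists2 v, v \in S & deg_in S v <= 1.
Proof.
move=> forestS S0.
have [/exists_inP//|/exists_inPn noleaf] := boolP [exists v in S, deg_in S v <= 1].
have [c cycle_c] : exists c, cycle_in e S c.
  by apply: cycle_of_deg_in_ge2 => // v /noleaf; rewrite ltnNge.
by have := forestS c; rewrite cycle_c.
Qed.

Lemma forest_sum_deg_in (S : {set T}) :
  induces_forest e S -> \sum_(v in S) deg_in S v <= (#|S|.-1).*2.
Proof.
move cardS: #|S| => m; elim: m S cardS => [|m IH] S cardS forestS.
  by rewrite (cards0_eq cardS) big_set0.
have [v vS leaf_v] : exists2 v, v \in S & deg_in S v <= 1.
  by apply: forest_has_leaf; rewrite // -card_gt0 cardS.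
have cardD1 : #|S :\ v| = m by move: cardS; rewrite (cardsD1 v) vS add1n => -[].
rewrite (sum_deg_in_setD1 vS).
have := IH _ cardD1 (induces_forestS (subD1set S v) forestS).
by have := deg_in_le vS; rewrite cardS /=; lia.
Qed.

Lemma induces_forest_star (S : {set T}) v :
  {in S :\ v &, forall x y, ~~ e x y} -> induces_forest e S.
Proof.
move=> indep c; apply/negP => /and4P[size_c uniq_c all_c cycle_c].
have [x [y [xc yc xv yv exy]]] :
    exists x y, [/\ x \in c, y \in c, x != v, y != v & e x y].
  have [/rot_to[i s c_rot]|v_c] := boolP (v \in c).
    move: (size_c) (uniq_c) (cycle_c) (mem_rot i c).
    rewrite -(size_rot i) -(rot_uniq i) -(rot_cycle i) c_rot.
    case: s {c_rot} => [|x [|y s]] //= _ /and3P[v_xys _ _] /andP[_ /andP[exy _]] memc.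
    exists x, y; move: v_xys; rewrite -!memc !inE !eqxx !orbT !negb_or.
    by case/and3P=> vx vy _; rewrite ![_ == v]eq_sym.
  case: c v_c size_c cycle_c {uniq_c all_c} => [|x [|y s]] //= v_c _ /andP[exy _].
  exists x, y; move: v_c; rewrite !inE !eqxx !orbT !negb_or.
  by case/and3P=> vx vy _; rewrite ![_ == v]eq_sym.
have inSv z : z \in c -> z != v -> z \in S :\ v.
  by move=> zc zv; rewrite !inE zv (allP all_c).
by rewrite (negbTE (indep x y (inSv x xc xv) (inSv y yc yv))) in exy.
Qed.

Lemma deg_le_deg_in (S W : {set T}) v : (forall u, e v u -> u \in W) ->
  deg e v <= deg_in S v + #|W :\: S|.
Proof.
move=> nbr_W; apply: (@leq_trans #|[set u in S | e v u] :|: (W :\: S)|).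
  apply/subset_leq_card/subsetP => u; rewrite !inE => evu.
  by rewrite evu nbr_W //; case: (u \in S).
by rewrite cardsU leq_subr.
Qed.

Lemma sum_deg_in_ge (S A W : {set T}) d :
  (forall v, v \in A -> forall u, e v u -> u \in W) ->
  (forall v, v \in A -> d <= deg e v) ->
  #|[set v in A | deg e v == d]| <= 1 ->
  #|A| * d.+1 <= \sum_(v in A) deg_in S v + #|A| * #|W :\: S| + 1.
Proof.
move=> nbr_W deg_A few_d.
apply: (@leq_trans (\sum_(v in A) (deg_in S v + #|W :\: S| + (deg e v == d)))).
  rewrite -sum_nat_const; apply: leq_sum => v vA.
  have := deg_le_deg_in S (nbr_W v vA); have := deg_A v vA.
  by case: eqP => /=; lia.
by rewrite !big_split /= sum_nat_const sum_indicator_card; lia.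
Qed.

Section Bipartite.
Variable V1 : {set T}.
Hypothesis e_bip : forall x y, e x y -> (x \in V1) = (y \notin V1).

Lemma sum_deg_in_sides (S : {set T}) :
  \sum_(v in S :&: V1) deg_in S v = \sum_(v in S :\: V1) deg_in S v.
Proof.
have deg_in_V1 v : v \in V1 -> deg_in S v = \sum_(u in S :\: V1) e v u.
  move=> vV1; rewrite sum_indicator_card; congr #|pred_of_set _|.
  apply/setP => u; rewrite !inE; case evu: (e v u); rewrite ?andbF //=.
  by rewrite -(e_bip evu) vV1 andbT.
have deg_in_V2 u : u \notin V1 -> deg_in S u = \sum_(v in S :&: V1) e u v.
  move=> uV2; rewrite sum_indicator_card; congr #|pred_of_set _|.
  apply/setP => v; rewrite !inE; case euv: (e u v); rewrite ?andbF //=.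
  by move: (e_bip euv); rewrite (negbTE uV2) !andbT => /esym/negbFE ->; rewrite andbT.
transitivity (\sum_(v in S :&: V1) \sum_(u in S :\: V1) (e v u : nat)).
  by apply: eq_bigr => v /setIP[_]; apply: deg_in_V1.
rewrite exchange_big; apply: eq_bigr => u /setDP[_ uV2].
by rewrite deg_in_V2 //; apply: eq_bigr => v _; rewrite e_sym.
Qed.

Lemma mul_count_absurd x k s :
  x <= k -> s <= k.*2.+2 -> (x + 2) * k.+2 <= s + (x + 2) * x + 1 -> False.
Proof.
move=> le_xk le_s lb; have : x * x <= x * k by rewrite leq_mul2l le_xk orbT.
nia.
Qed.

Lemma bipartite_count_absurd k a b s :
  a + b = k.*2.+3 -> a <= k.*2.+1 -> b <= k.*2.+1 -> s <= k.*2.+2 ->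
  a * k.+2 <= s + a * (k.*2.+1 - b) + 1 ->
  b * k.+2 <= s + b * (k.*2.+1 - a) + 1 -> False.
Proof.
move=> ab le_a le_b le_s lb_a lb_b.
have [le_ak|lt_ka] := leqP a k.+2.
- have [x a_eq] : exists x, a = x + 2 by exists (a - 2); lia.
  have b_eq : k.*2.+1 - b = x by lia.
  by rewrite b_eq a_eq in lb_a; apply: mul_count_absurd le_s lb_a; lia.
- have [x b_eq] : exists x, b = x + 2 by exists (b - 2); lia.
  have a_eq : k.*2.+1 - a = x by lia.
  by rewrite a_eq b_eq in lb_b; apply: mul_count_absurd le_s lb_b; lia.
Qed.

Lemma bipartite_forest_card_le k (S : {set T}) :
  #|V1| = k.*2.+1 -> #|~: V1| = k.*2.+1 ->
  (forall v, k.+1 <= deg e v) ->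
  #|[set v in V1 | deg e v == k.+1]| <= 1 ->
  #|[set v in ~: V1 | deg e v == k.+1]| <= 1 ->
  induces_forest e S -> #|S| <= k.*2.+2.
Proof.
move=> card_V1 card_V2 min_deg few1 few2 forestS; rewrite leqNgt; apply/negP.
case/card_geqP=> s [uniq_s size_s s_sub].
pose S' := [set x in s].
have forestS' : induces_forest e S'.
  by apply: induces_forestS forestS; apply/subsetP => x; rewrite inE; apply: s_sub.
have card_S' : #|S'| = k.*2.+3 by rewrite cardsE (card_uniqP uniq_s).
have card_sides : #|S' :&: V1| + #|S' :\: V1| = k.*2.+3 by rewrite cardsID.
have le_a : #|S' :&: V1| <= k.*2.+1 by rewrite -card_V1 subset_leq_card ?subsetIr.
have le_b : #|S' :\: V1| <= k.*2.+1.
  by rewrite -card_V2 subset_leq_card // setDE subsetIr.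
have le_edges : \sum_(v in S' :\: V1) deg_in S' v <= k.*2.+2.
  have := forest_sum_deg_in forestS'.
  by rewrite card_S' (big_setID V1) /= sum_deg_in_sides; lia.
have out1 : #|V1 :\: S'| = k.*2.+1 - #|S' :&: V1| by rewrite cardsD card_V1 setIC.
have out2 : #|~: V1 :\: S'| = k.*2.+1 - #|S' :\: V1|.
  by rewrite cardsD card_V2 setIC -setDE.
apply: (bipartite_count_absurd card_sides le_a le_b le_edges).
- rewrite -sum_deg_in_sides -out2; apply: sum_deg_in_ge => //.
  + by move=> v /setIP[_ vV1] u /e_bip; rewrite vV1 inE => <-.
  + apply: leq_trans few1; apply/subset_leq_card/subsetP => v.
    by rewrite !inE => /andP[/andP[_ ->] ->].
- rewrite -out1; apply: sum_deg_in_ge => //.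
  + by move=> v /setDP[_ vV2] u /e_bip; rewrite (negbTE vV2); case: (u \in V1).
  + apply: leq_trans few2; apply/subset_leq_card/subsetP => v.
    by rewrite !inE => /andP[/andP[-> _] ->].
Qed.

End Bipartite.

End InducedDegree.

Theorem theorem2p8 (T : finType) (e : rel T) (V1 V2 : {set T}) (n : nat) :
  odd n ->
  balanced_bipartite e V1 V2 n ->
  min_deg_ge e n.+1./2 ->
  #|[set v in V1 | deg e v == n.+1./2]| <= 1 ->
  #|[set u in V2 | deg e u == n.+1./2]| <= 1 ->
  forest_number_is e n.+1.
Proof.
move=> odd_n [[e_sym e_irr] [V1V2_disj [V1V2_cover [card_V1 [card_V2 e_bip]]]]].
have n_eq : n = (n./2).*2.+1 by rewrite -[LHS]odd_double_half odd_n.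
have -> : n.+1./2 = (n./2).+1 by rewrite {1}n_eq -doubleS doubleK.
move=> min_deg few1 few2.
have V2_eq : V2 = ~: V1.
  apply/setP => x; have /setP/(_ x) := V1V2_disj; have /setP/(_ x) := V1V2_cover.
  by rewrite !inE; case: (x \in V1); case: (x \in V2).
have bip x y : e x y -> (x \in V1) = (y \notin V1) by move/e_bip; rewrite V2_eq inE.
split.
- have [v vV1] : exists v, v \in V1 by apply/card_gt0P; rewrite card_V1 n_eq.
  exists (v |: V2); split; last by rewrite cardsU1 card_V2 V2_eq inE vV1.
  apply: (induces_forest_star (v := v)) => x y.
  rewrite !in_setD1 !in_setU1 => /andP[/negbTE-> /= xV2] /andP[/negbTE-> /= yV2].
  by apply/negP => /bip; move: xV2 yV2; rewrite V2_eq !inE => /negbTE-> ->.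
- move=> S; rewrite n_eq.
  by apply: (bipartite_forest_card_le e_sym e_irr bip); rewrite -?V2_eq -?n_eq.
Qed.
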